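(* Let $F$ be any finite subset of $\mathbb{N}$ and $a_k$ a positive integer for each $k \in F$. Then there exist a continuous map $f : \mathbb{R}^2 \to \mathbb{R}^2$ and a fixed point $p$ of $f$ such that $\{p\}$ is an isolated invariant set and $$i(f^n,p) = 1 - \sum_{k \in F,\ k\mid n} k\,a_k \quad \text{for every } n \ge 1,$$ i.e. $\{i(f^n,p)\}_{n\ge1} = \sigma^1 - \sum_{k\in F} a_k\sigma^k$.
   Context: $i(g,p)$ is the fixed point index; $\sigma^k_n = k$ if $k\mid n$ and $0$ otherwise. $\{p\}$ is an isolated invariant set if there is a compact $N$ with $\{p\} = \mathrm{Inv}(f,N) \subset \mathrm{int}(N)$, where $\mathrm{Inv}(f,N)$ is the set of $x \in N$ admitting a sequence $(x_n)_{n\in\mathbb{Z}}\subset N$ with $x_0=x$, $f(x_n)=x_{n+1}$. *)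

From Stdlib Require Import Reals Lra ZArith Arith List.
Open Scope R_scope.

Definition R2 := (R * R)%type.

Definition dist2 (x y : R2) : R :=
  sqrt ((fst x - fst y) ^ 2 + (snd x - snd y) ^ 2).

Definition continuous2 (f : R2 -> R2) : Prop :=
  forall x eps, 0 < eps -> exists delta, 0 < delta /\
    forall y, dist2 x y < delta -> dist2 (f x) (f y) < eps.

Definition bounded2 (N : R2 -> Prop) : Prop :=
  exists M, forall x, N x -> dist2 x (0, 0) <= M.

Definition closed2 (N : R2 -> Prop) : Prop :=
  forall x, (forall eps, 0 < eps -> exists y, N y /\ dist2 x y < eps) -> N x.

(* Heine-Borel: compact subsets of R^2 are the closed bounded ones *)
Definition compact2 (N : R2 -> Prop) : Prop := bounded2 N /\ closed2 N.

Definition interior2 (N : R2 -> Prop) (x : R2) : Prop :=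
  exists eps, 0 < eps /\ forall y, dist2 x y < eps -> N y.

Definition Inv (f : R2 -> R2) (N : R2 -> Prop) (x : R2) : Prop :=
  exists xs : Z -> R2, xs 0%Z = x /\
    forall n : Z, N (xs n) /\ f (xs n) = xs (n + 1)%Z.

Definition isolated_invariant_singleton (f : R2 -> R2) (p : R2) : Prop :=
  exists N : R2 -> Prop, compact2 N /\
    (forall x, Inv f N x <-> x = p) /\ interior2 N p.

Definition winds (gamma : R -> R2) (m : Z) : Prop :=
  (forall t, 0 <= t <= 1 -> gamma t <> (0, 0)) /\
  exists theta : R -> R,
    (forall t, continuity_pt theta t) /\
    (forall t, 0 <= t <= 1 ->
       gamma t = (dist2 (gamma t) (0,0) * cos (theta t),
                  dist2 (gamma t) (0,0) * sin (theta t))) /\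
    theta 1 - theta 0 = 2 * PI * IZR m.

Definition circ (p : R2) (r t : R) : R2 :=
  (fst p + r * cos (2 * PI * t), snd p + r * sin (2 * PI * t)).

Definition fp_index (g : R2 -> R2) (p : R2) (m : Z) : Prop :=
  g p = p /\
  exists r0, 0 < r0 /\ forall r, 0 < r < r0 ->
    (forall x, dist2 x p <= r -> g x = x -> x = p) /\
    winds (fun t => let x := circ p r t in
                    (fst x - fst (g x), snd x - snd (g x))) m.

(* sum_{k in F, k | n} k * a_k  (F given as a duplicate-free list) *)
Definition divsum (F : list nat) (a : nat -> nat) (n : nat) : Z :=
  fold_right (fun k acc =>
    ((if Nat.eqb k 0 then 0 else if Nat.eqb (Nat.modulo n k) 0
      then Z.of_nat (k * a k) else 0) + acc)%Z) 0%Z F.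

From Stdlib Require Import Reals ZArith List Lra Lia Classical.
From Coquelicot Require Import Complex.
Open Scope R_scope.

(* Identify R^2 with C.  Let m = Σ_{k ∈ F} k a_k, place m unit vectors e^{i dir j} on the
   circle, cut their indices into a_k blocks of length k for every k ∈ F, and let tau rotate
   each block by one step.  Around each direction take a thin cone and a continuous bump
   [cone j], positively homogeneous and equal to 1 at e^{i dir j}; the cones are pairwise
   disjoint.  The map f z = Σ_j 2 cone_j(z) e^{i dir (tau j)} vanishes off the cones and sends
   cone j onto the ray of dir (tau j), doubling lengths there, so on cone j
   f^n z = 2^n cone_j(z) e^{i dir (tau^n j)}.  Hence a point with a bounded forward orbit is
   mapped to 0, which makes {0} an isolated invariant set and the only fixed point of f^n.
   On the circle z = r e^{iθ}, since at most one cone contains z,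
     z - f^n z = z ∏_j (1 - 2^n cone_j(e^{iθ}) e^{i (dir (tau^n j) - θ)}).
   The j-th factor avoids (-∞, 0] unless tau^n j = j, and then it is e^{i (dir j - θ)} times a
   loop avoiding [0, ∞).  So it winds 0 or -1 times, and
   i(f^n, 0) = 1 - #Fix(tau^n) = 1 - Σ_{k ∈ F, k | n} k a_k. *)

Definition expi (x : R) : C := (cos x, sin x).

Lemma RtoC_mult_expi (r x : R) : (r * expi x)%C = (r * cos x, r * sin x).
Proof. unfold expi, Cmult; simpl; f_equal; ring. Qed.

Lemma Cmod_expi (x : R) : Cmod (expi x) = 1.
Proof.
  unfold Cmod, expi; cbn [fst snd].
  replace (cos x ^ 2 + sin x ^ 2) with 1 by (rewrite <- (sin2_cos2 x); unfold Rsqr; ring).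
  apply sqrt_1.
Qed.

Lemma expi_add (a b : R) : (expi a * expi b)%C = expi (a + b).
Proof. unfold expi, Cmult; simpl. rewrite cos_plus, sin_plus. f_equal; ring. Qed.

Lemma expi_0 : expi 0 = 1%C.
Proof. unfold expi. rewrite cos_0, sin_0. reflexivity. Qed.

Lemma expi_PI : expi PI = (- 1)%C.
Proof. unfold expi, Copp, RtoC; cbn [fst snd]. rewrite cos_PI, sin_PI. f_equal; ring. Qed.

Lemma expi_add_2PI (x : R) : expi (x + 2 * PI) = expi x.
Proof. unfold expi. rewrite cos_plus, sin_plus, cos_2PI, sin_2PI. f_equal; ring. Qed.

Lemma Cmod_scal (r : R) (z : C) : 0 <= r -> Cmod (r * z) = r * Cmod z.
Proof. intros Hr. rewrite Cmod_mult, Cmod_R, Rabs_pos_eq; auto. Qed.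

Lemma Cmod_triangle_inv (z w : C) : Rabs (Cmod z - Cmod w) <= Cmod (z - w).
Proof.
  pose proof (Cmod_triangle (z - w) w) as Hz. pose proof (Cmod_triangle (w - z) z) as Hw.
  replace (z - w + w)%C with z in Hz by ring. replace (w - z + z)%C with w in Hw by ring.
  replace (w - z)%C with (- (z - w))%C in Hw by ring. rewrite Cmod_opp in Hw.
  apply Rabs_le. lra.
Qed.

Lemma dist2_Cmod (x y : R2) : dist2 x y = Cmod (x - y).
Proof. unfold dist2, Cmod; simpl. f_equal; ring. Qed.

Lemma dist2_origin (z : C) : dist2 z (0, 0) = Cmod z.
Proof. unfold dist2, Cmod; cbn [fst snd]. f_equal; ring. Qed.

Lemma pair_sub_Cminus (x y : C) : (fst x - fst y, snd x - snd y) = (x - y)%C.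
Proof. unfold Cminus, Cplus, Copp. reflexivity. Qed.

Lemma circ_origin (r t : R) : circ (0, 0) r t = (r * expi (2 * PI * t))%C.
Proof. rewrite RtoC_mult_expi. unfold circ; simpl. f_equal; ring. Qed.

Lemma in_seq0 (i k : nat) : In i (seq 0 k) <-> (i < k)%nat.
Proof. rewrite in_seq. lia. Qed.

Lemma sum_neg_indicator (p : nat -> bool) (l : list nat) :
  fold_right (fun i s => ((if p i then -1 else 0) + s)%Z) 0%Z l
  = (- Z.of_nat (length (filter p l)))%Z.
Proof.
  induction l as [|i l IH]; cbn [fold_right filter]; auto. rewrite IH.
  destruct (p i); [cbn [length]; rewrite Nat2Z.inj_succ |]; lia.
Qed.

Definition Csum (l : list nat) (v : nat -> C) : C := fold_right (fun i acc => (v i + acc)%C) 0%C l.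

Definition Cprod (l : list nat) (v : nat -> C) : C := fold_right (fun i acc => (v i * acc)%C) 1%C l.

Lemma Csum_ext (l : list nat) (v u : nat -> C) :
  (forall i, In i l -> v i = u i) -> Csum l v = Csum l u.
Proof. induction l as [|i l IH]; intros H; simpl; auto. rewrite H, IH; auto with datatypes. Qed.

Lemma Csum_0 (l : list nat) (v : nat -> C) : (forall i, In i l -> v i = 0%C) -> Csum l v = 0%C.
Proof.
  induction l as [|i l IH]; intros H; simpl; auto. rewrite H, IH; auto with datatypes. ring.
Qed.

Lemma Csum_single (l : list nat) (v : nat -> C) (j : nat) : NoDup l -> In j l ->
  (forall i, In i l -> i <> j -> v i = 0%C) -> Csum l v = v j.
Proof.
  induction l as [|i l IH]; intros Hnd Hj H; simpl in *; [contradiction |].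
  inversion Hnd as [| ? ? Hi Hnd']; subst. destruct Hj as [<- | Hj].
  - rewrite Csum_0; [ring |]. intros k Hk. apply H; auto. intros <-. contradiction.
  - rewrite H, IH; auto; [ring |]. intros <-. contradiction.
Qed.

Lemma Cmult_Csum (z : C) (l : list nat) (v : nat -> C) :
  (z * Csum l v)%C = Csum l (fun i => z * v i)%C.
Proof. induction l as [|i l IH]; simpl; [ring |]. rewrite <- IH. ring. Qed.

Lemma Cmod_Csum_sub_le (l : list nat) (v u : nat -> C) (B : R) :
  (forall i, In i l -> Cmod (v i - u i) <= B) ->
  Cmod (Csum l v - Csum l u) <= INR (length l) * B.
Proof.
  induction l as [|i l IH]; intros H.
  - simpl. replace (0 - 0)%C with (RtoC 0) by ring. rewrite Cmod_0. lra.
  - change (Csum (i :: l) v) with (v i + Csum l v)%C.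
    change (Csum (i :: l) u) with (u i + Csum l u)%C.
    replace (v i + Csum l v - (u i + Csum l u))%C with ((v i - u i) + (Csum l v - Csum l u))%C
      by ring.
    cbn [length]. rewrite S_INR. eapply Rle_trans; [apply Cmod_triangle |].
    pose proof (H i (or_introl eq_refl)). pose proof (IH (fun k Hk => H k (or_intror Hk))). lra.
Qed.

Lemma Cprod_one_sub (l : list nat) (x : nat -> C) : NoDup l ->
  (forall i j, In i l -> In j l -> i <> j -> x i = 0%C \/ x j = 0%C) ->
  Cprod l (fun i => 1 - x i)%C = (1 - Csum l x)%C.
Proof.
  induction l as [|i l IH]; intros Hnd H; [simpl; ring |].
  inversion Hnd as [| ? ? Hi Hnd']; subst.
  change (Cprod (i :: l) (fun i => 1 - x i)%C) with ((1 - x i) * Cprod l (fun i => 1 - x i))%C.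
  change (Csum (i :: l) x) with (x i + Csum l x)%C.
  rewrite IH; auto with datatypes.
  destruct (classic (x i = 0%C)) as [E | E].
  - rewrite E. ring.
  - rewrite (Csum_0 l x); [ring |]. intros j Hj.
    assert (Hij : i <> j) by (intros <-; contradiction).
    destruct (H i j (or_introl eq_refl) (or_intror Hj) Hij); [contradiction | auto].
Qed.

Lemma continuity_ext (f g : R -> R) : (forall t, f t = g t) -> continuity f -> continuity g.
Proof. intros E Hf t. apply (continuity_pt_locally_ext f g 1 t); auto. lra. Qed.

Lemma continuity_Cmod (g : R -> C) :
  continuity (fun t => Re (g t)) -> continuity (fun t => Im (g t)) ->
  continuity (fun t => Cmod (g t)).
Proof.
  intros Hre Him t.
  assert (Hsq : continuity (fun x => x ^ 2)) by reg.
  apply (continuity_pt_comp (fun t => Re (g t) ^ 2 + Im (g t) ^ 2) sqrt).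
  - exact (continuity_plus _ _ (continuity_comp _ _ Hre Hsq) (continuity_comp _ _ Him Hsq) t).
  - apply continuity_pt_sqrt. nra.
Qed.

Lemma two_le_pow2 (n : nat) : (1 <= n)%nat -> 2 <= 2 ^ n.
Proof.
  intros Hn. replace 2 with (2 ^ 1) at 1 by ring. apply Rle_pow; [lra | lia].
Qed.

Lemma sin_0_cos_pm1 (x : R) : sin x = 0 -> cos x = 1 \/ cos x = -1.
Proof.
  intros Hs. pose proof (sin2_cos2 x) as H. rewrite Hs in H. unfold Rsqr in H.
  assert (Hf : (cos x - 1) * (cos x + 1) = 0) by lra.
  apply Rmult_integral in Hf. lra.
Qed.

Lemma cos_le_off_gap (a x : R) : 0 <= a <= PI -> a <= x <= 2 * PI - a -> cos x <= cos a.
Proof.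
  intros Ha Hx. destruct (Rle_dec x PI).
  - destruct (Req_dec a x) as [-> | Hne]; [lra |].
    left. apply cos_decreasing_1; lra.
  - replace (cos x) with (cos (2 * PI - x)) by (rewrite cos_minus, cos_2PI, sin_2PI; ring).
    destruct (Req_dec a (2 * PI - x)) as [-> | Hne]; [lra |].
    left. apply cos_decreasing_1; lra.
Qed.

Lemma Rmax0_lipschitz (x y : R) : Rabs (Rmax 0 x - Rmax 0 y) <= Rabs (x - y).
Proof. unfold Rmax. destruct (Rle_dec 0 x), (Rle_dec 0 y); apply Rabs_le; split_Rabs; lra. Qed.

Lemma cos_sin_2atan (h : R) :
  cos (2 * atan h) = (1 - h²) / (1 + h²) /\ sin (2 * atan h) = 2 * h / (1 + h²).
Proof.
  rewrite cos_2a, sin_2a, cos_atan, sin_atan.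
  assert (Hs2 : sqrt (1 + h²) * sqrt (1 + h²) = 1 + h²) by (apply sqrt_sqrt; unfold Rsqr; nra).
  assert (Hs : 0 < sqrt (1 + h²)) by (apply sqrt_lt_R0; unfold Rsqr; nra).
  set (s := sqrt (1 + h²)) in *. rewrite <- Hs2. unfold Rsqr. split; field; lra.
Qed.

Lemma polar_half_angle (x y : R) : 0 < sqrt (x ^ 2 + y ^ 2) + x ->
  let r := sqrt (x ^ 2 + y ^ 2) in
  x = r * cos (2 * atan (y / (r + x))) /\ y = r * sin (2 * atan (y / (r + x))).
Proof.
  intros Hpos r. fold r in Hpos.
  assert (Hr2 : r ^ 2 = x ^ 2 + y ^ 2) by (unfold r; rewrite pow2_sqrt; nra).
  assert (Hr : 0 < r) by (destruct (sqrt_pos (x ^ 2 + y ^ 2)); [auto | unfold r in *; nra]).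
  assert (E : (r + x) ^ 2 + y ^ 2 = 2 * r * (r + x)) by nra.
  destruct (cos_sin_2atan (y / (r + x))) as [-> ->].
  replace ((y / (r + x))²) with (y ^ 2 / (r + x) ^ 2) by (unfold Rsqr; field; lra).
  assert (Hden : (r + x) ^ 2 + y ^ 2 <> 0) by nra.
  split.
  - replace (r * ((1 - y ^ 2 / (r + x) ^ 2) / (1 + y ^ 2 / (r + x) ^ 2)))
      with (r * ((r + x) ^ 2 - y ^ 2) / ((r + x) ^ 2 + y ^ 2)) by (field; lra).
    rewrite E. replace ((r + x) ^ 2 - y ^ 2) with (2 * x * (r + x)) by nra. field; lra.
  - replace (r * (2 * (y / (r + x)) / (1 + y ^ 2 / (r + x) ^ 2)))
      with (r * (2 * y * (r + x)) / ((r + x) ^ 2 + y ^ 2)) by (field; lra).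
    rewrite E. field; lra.
Qed.

Lemma Cmod_add_Re_pos (z : C) : (Im z = 0 -> 0 < Re z) -> 0 < Cmod z + Re z.
Proof.
  intros Hz. pose proof (Cmod2_alt z) as E. pose proof (Cmod_ge_0 z).
  destruct (Req_dec (Im z) 0) as [H0 | H0].
  - specialize (Hz H0). lra.
  - pose proof (Rsqr_pos_lt _ H0). unfold Rsqr in *. nra.
Qed.

(** * Winding numbers *)

Lemma winds_polar (g : R -> C) (m : Z) :
  winds g m <->
  (forall t, 0 <= t <= 1 -> g t <> 0%C) /\
  exists th : R -> R, continuity th /\
    (forall t, 0 <= t <= 1 -> g t = (Cmod (g t) * expi (th t))%C) /\
    th 1 - th 0 = 2 * PI * IZR m.
Proof.
  unfold winds. split; intros [Hnz [th [Hc [Hp Hd]]]]; split; auto; exists th;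
    repeat split; auto; intros t Ht.
  - rewrite RtoC_mult_expi, <- dist2_origin; auto.
  - rewrite dist2_origin, <- RtoC_mult_expi; auto.
Qed.

Lemma winds_ext (g h : R -> C) (m : Z) :
  (forall t, 0 <= t <= 1 -> g t = h t) -> winds g m -> winds h m.
Proof.
  intros E [Hnz [th [Hc [Hp Hd]]]]. split.
  - intros t Ht. rewrite <- E; auto.
  - exists th. repeat split; auto. intros t Ht. rewrite <- E; auto.
Qed.

Lemma winds_mult (g h : R -> C) (m1 m2 : Z) :
  winds g m1 -> winds h m2 -> winds (fun t => (g t * h t)%C) (m1 + m2).
Proof.
  rewrite !winds_polar. intros [Hg0 [th1 [Hc1 [Hp1 Hd1]]]] [Hh0 [th2 [Hc2 [Hp2 Hd2]]]]. split.
  - intros t Ht E. apply (f_equal Cmod) in E. rewrite Cmod_mult, Cmod_0 in E.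
    pose proof (proj1 (Cmod_gt_0 _) (Hg0 t Ht)). pose proof (proj1 (Cmod_gt_0 _) (Hh0 t Ht)). nra.
  - exists (fun t => th1 t + th2 t). repeat split.
    + reg.
    + intros t Ht. rewrite Cmod_mult, RtoC_mult, <- expi_add.
      transitivity ((Cmod (g t) * expi (th1 t)) * (Cmod (h t) * expi (th2 t)))%C.
      * rewrite <- Hp1, <- Hp2; auto.
      * ring.
    + rewrite plus_IZR. lra.
Qed.

Lemma winds_opp (g : R -> C) (m : Z) : winds g m -> winds (fun t => (- g t)%C) m.
Proof.
  rewrite !winds_polar. intros [Hg0 [th [Hc [Hp Hd]]]]. split.
  - intros t Ht E. apply (Hg0 t Ht). replace (g t) with (- - g t)%C by ring. rewrite E. ring.
  - exists (fun t => th t + PI). repeat split.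
    + reg.
    + intros t Ht. rewrite Cmod_opp, <- expi_add, expi_PI, (Hp t Ht) at 1. ring.
    + lra.
Qed.

Lemma winds_const (c : R) : 0 < c -> winds (fun _ => RtoC c) 0.
Proof.
  intros Hc. apply winds_polar. split.
  - intros t _ E. injection E. lra.
  - exists (fun _ => 0). repeat split.
    + reg.
    + intros t _. rewrite Cmod_R, Rabs_pos_eq, expi_0 by lra. ring.
    + simpl. ring.
Qed.

Lemma winds_expi (a : R) (m : Z) : winds (fun t => expi (a + 2 * PI * IZR m * t)) m.
Proof.
  apply winds_polar. split.
  - intros t _ E. apply (f_equal Cmod) in E. rewrite Cmod_expi, Cmod_0 in E. lra.
  - exists (fun t => a + 2 * PI * IZR m * t). repeat split.
    + reg.
    + intros t _. rewrite Cmod_expi. ring.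
    + ring.
Qed.

Lemma winds_Cprod (l : list nat) (g : nat -> R -> C) (m : nat -> Z) :
  (forall i, In i l -> winds (g i) (m i)) ->
  winds (fun t => Cprod l (fun i => g i t)) (fold_right (fun i s => m i + s) 0 l)%Z.
Proof.
  induction l as [|i l IH]; intros Hl; simpl.
  - apply winds_const. lra.
  - apply winds_mult; auto with datatypes.
Qed.

Lemma winds_avoiding_nonpos_reals (g : R -> C) :
  continuity (fun t => Re (g t)) -> continuity (fun t => Im (g t)) ->
  (forall t, Im (g t) = 0 -> 0 < Re (g t)) -> g 0 = g 1 -> winds g 0.
Proof.
  intros Hre Him Hslit Hloop.
  assert (Hpos : forall t, 0 < Cmod (g t) + Re (g t)) by (intros t; apply Cmod_add_Re_pos, Hslit).
  apply winds_polar. split.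
  - intros t _ E. specialize (Hslit t). rewrite E in Hslit. simpl in Hslit. lra.
  - exists (fun t => 2 * atan (Im (g t) / (Cmod (g t) + Re (g t)))). repeat split.
    + apply continuity_mult; [reg |].
      apply (continuity_comp _ atan);
        [| intros x; apply derivable_continuous_pt, derivable_pt_atan].
      apply (continuity_div (fun t => Im (g t)) (fun t => Cmod (g t) + Re (g t))); auto.
      * apply (continuity_plus (fun t => Cmod (g t)) (fun t => Re (g t))); auto.
        apply continuity_Cmod; auto.
      * intros t. specialize (Hpos t). lra.
    + intros t _. rewrite RtoC_mult_expi.
      pose proof (polar_half_angle (Re (g t)) (Im (g t)) (Hpos t)) as Hp.
      revert Hp. generalize (g t) as z. intros [x y] [E1 E2]. f_equal; auto.
    + rewrite Hloop. ring.
Qed.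

Lemma winds_avoiding_nonneg_reals (g : R -> C) :
  continuity (fun t => Re (g t)) -> continuity (fun t => Im (g t)) ->
  (forall t, Im (g t) = 0 -> Re (g t) < 0) -> g 0 = g 1 -> winds g 0.
Proof.
  intros Hre Him Hslit Hloop.
  apply (winds_ext (fun t => (- - g t)%C)); [intros; ring |].
  apply winds_opp, winds_avoiding_nonpos_reals.
  - exact (continuity_opp _ Hre).
  - exact (continuity_opp _ Him).
  - intros t Him0. unfold Re, Im in *. simpl in *.
    assert (Hre0 : fst (g t) < 0) by (apply Hslit; lra). lra.
  - rewrite Hloop. reflexivity.
Qed.

(** * Disjoint cones *)

Definition along (b : R) (z : C) : R := Re (z * Cconj (expi b)).

Lemma along_le (b : R) (z : C) : Rabs (along b z) <= Cmod z.
Proof.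
  unfold along. eapply Rle_trans; [apply re_le_Cmod |].
  rewrite Cmod_mult, Cmod_conj, Cmod_expi. lra.
Qed.

Lemma along_expi (b c : R) : along b (expi c) = cos (c - b).
Proof. unfold along, expi, Cconj, Cmult, Re; simpl. rewrite cos_minus. ring. Qed.

Lemma along_scal (b r : R) (z : C) : along b (r * z) = r * along b z.
Proof. unfold along. rewrite <- Cmult_assoc, re_scal_l. reflexivity. Qed.

Lemma along_sub (b : R) (z w : C) : along b (z - w) = along b z - along b w.
Proof. unfold along, Re, Cconj, Cmult, Cminus, Cplus, Copp; simpl. ring. Qed.

Lemma along_add_le (a b : R) (z : C) :
  along a z + along b z <= Cmod z * Cmod (expi a + expi b).
Proof.
  unfold along. rewrite <- re_plus.
  replace (z * Cconj (expi a) + z * Cconj (expi b))%C with (z * Cconj (expi a + expi b))%C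
    by (rewrite Cplus_conj; ring).
  eapply Rle_trans; [apply Rle_abs |]. eapply Rle_trans; [apply re_le_Cmod |].
  rewrite Cmod_mult, Cmod_conj. lra.
Qed.

Lemma Cmod_expi_add_sq (a b : R) : Cmod (expi a + expi b) ^ 2 = 2 + 2 * cos (a - b).
Proof.
  rewrite Cmod2_alt, cos_minus. unfold expi, Re, Im, Cplus; simpl.
  pose proof (sin2_cos2 a). pose proof (sin2_cos2 b). unfold Rsqr in *. nra.
Qed.

Section Cones.

Variable m : nat.

(* Distinct directions are at least 2π/(m+2) apart; the [+ 2] keeps this gap at most π, so
   that cos_gap < 1 and aperture < 1 also when m = 0.  The bound
   cos_gap <= 2 aperture^2 - 1 is what makes the cones disjoint. *)
Definition dir (j : nat) : R := 2 * PI * INR j / (INR m + 2).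

Definition cos_gap : R := cos (2 * PI / (INR m + 2)).

Definition aperture : R := (3 + cos_gap) / 4.

Lemma gap_bounds : 0 < 2 * PI / (INR m + 2) <= PI.
Proof.
  pose proof PI_RGT_0. pose proof (pos_INR m). split.
  - apply Rdiv_lt_0_compat; lra.
  - apply Rmult_le_reg_r with (INR m + 2); [lra |].
    unfold Rdiv. rewrite Rmult_assoc, Rinv_l by lra. nra.
Qed.

Lemma cos_gap_bounds : -1 <= cos_gap < 1.
Proof.
  pose proof PI_RGT_0. pose proof gap_bounds. unfold cos_gap. split; [apply COS_bound |].
  rewrite <- cos_0. apply cos_decreasing_1; lra.
Qed.

Lemma aperture_bounds :
  0 <= aperture < 1 /\ cos_gap <= aperture /\ cos_gap <= 2 * aperture ^ 2 - 1.
Proof. pose proof cos_gap_bounds. unfold aperture. repeat split; nra. Qed.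

Lemma cos_dir_sub_le (i j : nat) :
  (i < m)%nat -> (j < m)%nat -> i <> j -> cos (dir i - dir j) <= cos_gap.
Proof.
  assert (Hlt : forall i j, (j < i < m)%nat -> cos (dir i - dir j) <= cos_gap).
  { clear i j. intros i j Hij.
    set (a := 2 * PI / (INR m + 2)). pose proof gap_bounds as Ha. fold a in Ha.
    assert (HaN : a * (INR m + 2) = 2 * PI) by (unfold a; field; pose proof (pos_INR m); lra).
    assert (Hk1 : 1 <= INR i - INR j) by (rewrite <- minus_INR by lia; apply (le_INR 1); lia).
    assert (Hk2 : INR i - INR j + 1 <= INR m + 2).
    { assert (INR i <= INR m) by (apply le_INR; lia). pose proof (pos_INR j). lra. }
    replace (dir i - dir j) with (a * (INR i - INR j))
      by (unfold dir, a; field; pose proof (pos_INR m); lra).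
    assert (a * (INR i - INR j + 1) <= a * (INR m + 2)) by (apply Rmult_le_compat_l; lra).
    unfold cos_gap; fold a. apply cos_le_off_gap; [lra | split; nra]. }
  intros Hi Hj Hij. destruct (Nat.lt_trichotomy i j) as [H | [H | H]].
  - rewrite <- cos_neg, Ropp_minus_distr. apply Hlt. lia.
  - contradiction.
  - apply Hlt. lia.
Qed.

Definition cone (j : nat) (z : C) : R :=
  Rmax 0 ((along (dir j) z - aperture * Cmod z) / (1 - aperture)).

Lemma cone_nonneg (j : nat) (z : C) : 0 <= cone j z.
Proof. apply Rmax_l. Qed.

Lemma cone_pos (j : nat) (z : C) : 0 < cone j z -> aperture * Cmod z < along (dir j) z.
Proof.
  unfold cone. pose proof aperture_bounds. intros Hc.
  destruct (Rle_lt_dec ((along (dir j) z - aperture * Cmod z) / (1 - aperture)) 0) as [Hle | Hlt].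
  - rewrite Rmax_left in Hc by lra. lra.
  - apply Rmult_lt_compat_r with (r := 1 - aperture) in Hlt; [| lra].
    unfold Rdiv in Hlt. rewrite Rmult_0_l, Rmult_assoc, Rinv_l, Rmult_1_r in Hlt by lra. lra.
Qed.

Lemma cones_disjoint (i j : nat) (z : C) :
  (i < m)%nat -> (j < m)%nat -> i <> j -> 0 < cone i z -> 0 < cone j z -> False.
Proof.
  intros Hi Hj Hij Ci Cj. apply cone_pos in Ci, Cj.
  pose proof aperture_bounds as [[A0 A1] [A2 A3]].
  pose proof (cos_dir_sub_le i j Hi Hj Hij) as Hcos.
  pose proof (Cmod_expi_add_sq (dir i) (dir j)) as Hsq.
  assert (Hsum : Cmod (expi (dir i) + expi (dir j)) <= 2 * aperture)
    by (pose proof (Cmod_ge_0 (expi (dir i) + expi (dir j))); nra).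
  pose proof (along_add_le (dir i) (dir j) z). pose proof (Cmod_ge_0 z).
  assert (Cmod z * Cmod (expi (dir i) + expi (dir j)) <= Cmod z * (2 * aperture))
    by (apply Rmult_le_compat_l; lra).
  lra.
Qed.

Lemma cone_scal (j : nat) (r : R) (z : C) : 0 <= r -> cone j (r * z) = r * cone j z.
Proof.
  intros Hr. pose proof aperture_bounds. unfold cone.
  rewrite along_scal, Cmod_scal by auto.
  replace ((r * along (dir j) z - aperture * (r * Cmod z)) / (1 - aperture))
    with (r * ((along (dir j) z - aperture * Cmod z) / (1 - aperture))) by (field; lra).
  rewrite <- (Rmult_0_r r) at 1. apply RmaxRmult; auto.
Qed.

Lemma cone_expi (j : nat) (th : R) :
  cone j (expi th) = Rmax 0 ((cos (th - dir j) - aperture) / (1 - aperture)).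
Proof. unfold cone. rewrite along_expi, Cmod_expi, Rmult_1_r. reflexivity. Qed.

Lemma cone_dir (i j : nat) (r : R) : (i < m)%nat -> (j < m)%nat -> 0 <= r ->
  cone i (r * expi (dir j)) = if (i =? j)%nat then r else 0.
Proof.
  intros Hi Hj Hr. rewrite cone_scal, cone_expi by auto. pose proof aperture_bounds.
  destruct (Nat.eqb_spec i j) as [<- | Hne].
  - rewrite Rminus_diag, cos_0, Rdiv_diag, Rmax_right by lra. ring.
  - pose proof (cos_dir_sub_le j i Hj Hi (not_eq_sym Hne)).
    rewrite Rmax_left; [ring |].
    apply Rmult_le_reg_r with (1 - aperture); [lra |].
    unfold Rdiv. rewrite Rmult_assoc, Rinv_l by lra. lra.
Qed.

Lemma cone_0 (j : nat) : cone j 0 = 0.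
Proof.
  replace (RtoC 0) with (0 * 0)%C by ring.
  rewrite cone_scal; [ring | lra].
Qed.

Lemma cone_support (z : C) :
  (forall i, (i < m)%nat -> cone i z = 0) \/
  exists j, (j < m)%nat /\ 0 < cone j z /\ forall i, (i < m)%nat -> i <> j -> cone i z = 0.
Proof.
  destruct (classic (exists j, (j < m)%nat /\ 0 < cone j z)) as [[j [Hj Hc]] | Hnone].
  - right. exists j. repeat split; auto. intros i Hi Hij.
    destruct (cone_nonneg i z) as [Hp | Hp]; auto.
    exfalso. apply (cones_disjoint i j z); auto.
  - left. intros i Hi. destruct (cone_nonneg i z) as [Hp | Hp]; auto.
    exfalso. eauto.
Qed.

Lemma cone_lipschitz (j : nat) (z w : C) :
  Rabs (cone j z - cone j w) <= (1 + aperture) / (1 - aperture) * Cmod (z - w).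
Proof.
  pose proof aperture_bounds as [[A0 A1] _]. unfold cone.
  eapply Rle_trans; [apply Rmax0_lipschitz |].
  assert (Hnum : Rabs (along (dir j) (z - w) - aperture * (Cmod z - Cmod w))
                 <= (1 + aperture) * Cmod (z - w)).
  { eapply Rle_trans; [apply Rabs_triang |].
    rewrite Rabs_Ropp, Rabs_mult, (Rabs_pos_eq aperture) by lra.
    pose proof (along_le (dir j) (z - w)). pose proof (Cmod_triangle_inv z w).
    assert (aperture * Rabs (Cmod z - Cmod w) <= aperture * Cmod (z - w))
      by (apply Rmult_le_compat_l; lra).
    lra. }
  replace ((along (dir j) z - aperture * Cmod z) / (1 - aperture)
           - (along (dir j) w - aperture * Cmod w) / (1 - aperture))
    with ((along (dir j) (z - w) - aperture * (Cmod z - Cmod w)) * / (1 - aperture))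
    by (rewrite along_sub; field; lra).
  replace ((1 + aperture) / (1 - aperture) * Cmod (z - w))
    with ((1 + aperture) * Cmod (z - w) * / (1 - aperture)) by (field; lra).
  rewrite Rabs_mult, (Rabs_pos_eq (/ (1 - aperture))) by (apply Rlt_le, Rinv_0_lt_compat; lra).
  apply Rmult_le_compat_r; [apply Rlt_le, Rinv_0_lt_compat; lra | exact Hnum].
Qed.

Lemma continuity_cone_circle (j : nat) : continuity (fun t => cone j (expi (2 * PI * t))).
Proof.
  set (h t := (cos (2 * PI * t - dir j) - aperture) / (1 - aperture)).
  apply (continuity_ext (fun t => (h t + Rabs (h t)) / 2)).
  - intros t. rewrite cone_expi. fold (h t). unfold Rmax.
    destruct (Rle_dec 0 (h t)); split_Rabs; lra.
  - unfold h. generalize (dir j) aperture. intros b a. reg.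
Qed.

End Cones.

(** * The map and its dynamics *)

Lemma continuous2_of_lipschitz (f : R2 -> R2) (K : R) : 0 <= K ->
  (forall x y, Cmod (f x - f y) <= K * Cmod (x - y)) -> continuous2 f.
Proof.
  intros HK Hf x eps Heps. exists (eps / (K + 1)). split; [apply Rdiv_lt_0_compat; lra |].
  intros y Hy. rewrite dist2_Cmod in *. eapply Rle_lt_trans; [apply Hf |].
  apply Rle_lt_trans with (K * (eps / (K + 1))); [apply Rmult_le_compat_l; lra |].
  replace (K * (eps / (K + 1))) with (eps - eps / (K + 1)) by (field; lra).
  assert (0 < eps / (K + 1)) by (apply Rdiv_lt_0_compat; lra). lra.
Qed.

Lemma compact2_closed_ball (p : R2) (r : R) : compact2 (fun x => dist2 x p <= r).
Proof.
  split.
  - exists (Cmod p + r). intros x Hx. rewrite dist2_origin. rewrite dist2_Cmod in Hx.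
    pose proof (Cmod_triangle (x - p) p) as Htri.
    assert (E : @eq C (x - p + p)%C x) by ring. rewrite E in Htri. lra.
  - intros x Hx. rewrite dist2_Cmod. apply Rnot_lt_le. intros Hgt.
    destruct (Hx (Cmod (x - p) - r)) as [y [Hy Hxy]]; [lra |]. cbv beta in Hy.
    rewrite dist2_Cmod in Hy, Hxy.
    pose proof (Cmod_triangle (x - y) (y - p)) as Htri.
    assert (E : @eq C (x - y + (y - p))%C (x - p)%C) by ring. rewrite E in Htri. lra.
Qed.

Lemma interior2_closed_ball (p : R2) (r : R) : 0 < r -> interior2 (fun x => dist2 x p <= r) p.
Proof.
  intros Hr. exists r. split; auto. intros y Hy. rewrite dist2_Cmod in *.
  assert (E : @eq C (y - p)%C (- (p - y))%C) by ring. rewrite E, Cmod_opp. lra.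
Qed.

Section ConeMap.

Variable m : nat.
Variable tau : nat -> nat.
Hypothesis tau_lt : forall i, (i < m)%nat -> (tau i < m)%nat.

Definition cone_map (z : C) : C :=
  Csum (seq 0 m) (fun j => RtoC (2 * cone m j z) * expi (dir m (tau j)))%C.

Definition cone_term (n : nat) (z : C) (j : nat) : C :=
  (RtoC (2 ^ n * cone m j z) * expi (dir m (Nat.iter n tau j)))%C.

Lemma iter_tau_lt (n i : nat) : (i < m)%nat -> (Nat.iter n tau i < m)%nat.
Proof. intros Hi. induction n; simpl; auto. Qed.

Lemma cone_term_vanish (n : nat) (z : C) (j : nat) : cone m j z = 0 -> cone_term n z j = 0%C.
Proof. intros H. unfold cone_term. rewrite H, Rmult_0_r. ring. Qed.

Lemma cone_map_0 : cone_map 0 = 0%C.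
Proof.
  apply Csum_0. intros j _. rewrite cone_0, Rmult_0_r. ring.
Qed.

Lemma cone_map_ray (j : nat) (r : R) : (j < m)%nat -> 0 <= r ->
  cone_map (r * expi (dir m j)) = (RtoC (2 * r) * expi (dir m (tau j)))%C.
Proof.
  intros Hj Hr. unfold cone_map. rewrite (Csum_single _ _ j).
  - rewrite cone_dir, Nat.eqb_refl; auto.
  - apply seq_NoDup.
  - apply in_seq0; auto.
  - intros i Hi Hij. apply in_seq0 in Hi.
    rewrite cone_dir; auto. apply Nat.eqb_neq in Hij. rewrite Hij, Rmult_0_r. ring.
Qed.

Lemma iter_cone_map (n : nat) (z : C) : (1 <= n)%nat ->
  Nat.iter n cone_map z = Csum (seq 0 m) (cone_term n z).
Proof.
  intros Hn. induction n as [|n IH]; [lia |].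
  destruct (Nat.eq_dec n 0) as [-> | Hn0].
  - apply Csum_ext. intros j _. unfold cone_term. simpl. rewrite Rmult_1_r. reflexivity.
  - rewrite Nat.iter_succ, IH by lia.
    destruct (cone_support m z) as [Hnone | [j [Hj [Hc Hother]]]].
    + rewrite Csum_0, cone_map_0; [symmetry; apply Csum_0 |];
        intros i Hi; apply in_seq0 in Hi; apply cone_term_vanish; auto.
    + assert (Hsingle : forall k, Csum (seq 0 m) (cone_term k z) = cone_term k z j).
      { intros k. apply Csum_single; [apply seq_NoDup | apply in_seq0; auto |].
        intros i Hi Hij. apply in_seq0 in Hi. apply cone_term_vanish; auto. }
      rewrite !Hsingle. unfold cone_term at 1. rewrite cone_map_ray.
      * unfold cone_term. rewrite Nat.iter_succ. f_equal. f_equal. simpl. ring.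
      * apply iter_tau_lt; auto.
      * apply Rmult_le_pos; [apply pow_le; lra | apply cone_nonneg].
Qed.

Lemma iter_cone_map_single (n : nat) (z : C) (j : nat) : (1 <= n)%nat -> (j < m)%nat ->
  (forall i, (i < m)%nat -> i <> j -> cone m i z = 0) -> Nat.iter n cone_map z = cone_term n z j.
Proof.
  intros Hn Hj Hother. rewrite iter_cone_map by auto.
  apply Csum_single; [apply seq_NoDup | apply in_seq0; auto |].
  intros i Hi Hij. apply in_seq0 in Hi. apply cone_term_vanish; auto.
Qed.

Lemma iter_cone_map_vanish (n : nat) (z : C) : (1 <= n)%nat ->
  (forall i, (i < m)%nat -> cone m i z = 0) -> Nat.iter n cone_map z = 0%C.
Proof.
  intros Hn Hnone. rewrite iter_cone_map by auto.
  apply Csum_0. intros i Hi. apply in_seq0 in Hi. apply cone_term_vanish; auto.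
Qed.

Lemma cone_map_continuous : continuous2 cone_map.
Proof.
  pose proof (aperture_bounds m) as [[A0 A1] _].
  set (L := (1 + aperture m) / (1 - aperture m)).
  assert (HL : 0 <= L) by (apply Rlt_le, Rdiv_lt_0_compat; lra).
  apply (continuous2_of_lipschitz _ (INR m * (2 * L))).
  { pose proof (pos_INR m). nra. }
  intros x y. unfold cone_map. rewrite <- (length_seq m 0) at 3.
  apply Rle_trans with (INR (length (seq 0 m)) * (2 * L * Cmod (x - y))); [| right; ring].
  apply Cmod_Csum_sub_le. intros j _.
  replace (RtoC (2 * cone m j x) * expi (dir m (tau j))
           - RtoC (2 * cone m j y) * expi (dir m (tau j)))%C
    with (RtoC (2 * (cone m j x - cone m j y)) * expi (dir m (tau j)))%C
    by (rewrite !RtoC_mult, RtoC_minus; ring).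
  rewrite Cmod_mult, Cmod_expi, Cmod_R, Rmult_1_r, Rabs_mult, Rabs_pos_eq by lra.
  pose proof (cone_lipschitz m j x y) as Hlip. fold L in Hlip. lra.
Qed.

Lemma iter_cone_map_fixed_point (n : nat) (z : C) :
  (1 <= n)%nat -> Nat.iter n cone_map z = z -> z = 0%C.
Proof.
  intros Hn Hz. destruct (cone_support m z) as [Hnone | [j [Hj [Hc Hother]]]].
  - rewrite <- Hz. apply iter_cone_map_vanish; auto.
  - exfalso. rewrite (iter_cone_map_single n z j) in Hz by auto. unfold cone_term in Hz.
    pose proof (two_le_pow2 n Hn).
    pose proof (cone_dir m j (Nat.iter n tau j) (2 ^ n * cone m j z) Hj (iter_tau_lt n j Hj)
      ltac:(apply Rmult_le_pos; lra)) as Hcone.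
    rewrite Hz in Hcone. destruct (j =? Nat.iter n tau j)%nat; nra.
Qed.

Lemma cone_map_escapes (y : C) :
  (forall k, Cmod (Nat.iter (S k) cone_map y) <= 1) -> cone_map y = 0%C.
Proof.
  intros Hbounded. destruct (cone_support m y) as [Hnone | [j [Hj [Hc Hother]]]].
  - exact (iter_cone_map_vanish 1 y (le_n 1) Hnone).
  - exfalso. destruct (Pow_x_infinity 2 ltac:(rewrite Rabs_pos_eq; lra) (2 / cone m j y)) as [k Hk].
    specialize (Hk (S k) ltac:(lia)). rewrite Rabs_pos_eq in Hk by (apply pow_le; lra).
    specialize (Hbounded k). rewrite (iter_cone_map_single (S k) y j) in Hbounded by (auto; lia).
    unfold cone_term in Hbounded.
    rewrite Cmod_mult, Cmod_expi, Cmod_R, Rmult_1_r, Rabs_pos_eq in Hbounded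
      by (apply Rmult_le_pos; [apply pow_le | apply cone_nonneg]; lra).
    apply Rmult_ge_compat_r with (r := cone m j y) in Hk; [| lra].
    unfold Rdiv in Hk. rewrite Rmult_assoc, Rinv_l in Hk by lra. lra.
Qed.

Lemma cone_map_isolated : isolated_invariant_singleton cone_map (0, 0).
Proof.
  exists (fun x => dist2 x (0, 0) <= 1). split; [apply compact2_closed_ball | split].
  - intros x. split.
    + intros [xs [Hx0 Hxs]].
      assert (Hforward : forall k, xs (Z.of_nat k) = Nat.iter (S k) cone_map (xs (-1)%Z)).
      { induction k as [|k IH].
        - symmetry. apply (Hxs (-1)%Z).
        - rewrite Nat2Z.inj_succ, <- Z.add_1_r, <- (proj2 (Hxs (Z.of_nat k))), IH. reflexivity. }
      rewrite <- Hx0. change 0%Z with (Z.of_nat 0). rewrite Hforward.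
      apply cone_map_escapes. intros k. rewrite <- Hforward, <- dist2_origin.
      apply (Hxs (Z.of_nat k)).
    + intros ->. exists (fun _ => (0, 0)). split; auto. intros k. split.
      * cbv beta. rewrite dist2_origin. change (Cmod (RtoC 0) <= 1). rewrite Cmod_0. lra.
      * apply cone_map_0.
  - apply interior2_closed_ball. lra.
Qed.

Section Index.

Variable n : nat.
Hypothesis n_pos : (1 <= n)%nat.

Definition amplitude (i : nat) (t : R) : R := 2 ^ n * cone m i (expi (2 * PI * t)).

Definition index_factor (i : nat) (t : R) : C :=
  (1 - RtoC (amplitude i t) * expi (dir m (Nat.iter n tau i) - 2 * PI * t))%C.

Lemma amplitude_nonneg (i : nat) (t : R) : 0 <= amplitude i t.
Proof. apply Rmult_le_pos; [apply pow_le; lra | apply cone_nonneg]. Qed.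

Lemma amplitude_loop (i : nat) : amplitude i 1 = amplitude i 0.
Proof.
  unfold amplitude.
  rewrite Rmult_1_r, Rmult_0_r, <- (Rplus_0_l (2 * PI)), expi_add_2PI. reflexivity.
Qed.

Lemma continuity_amplitude (i : nat) : continuity (amplitude i).
Proof. apply continuity_scal, continuity_cone_circle. Qed.

Lemma index_factor_parts (i : nat) (t : R) :
  let phi := dir m (Nat.iter n tau i) - 2 * PI * t in
  Re (index_factor i t) = 1 - amplitude i t * cos phi /\
  Im (index_factor i t) = - (amplitude i t * sin phi).
Proof. unfold index_factor, Re, Im; simpl. split; ring. Qed.

Lemma continuity_index_factor (i : nat) :
  continuity (fun t => Re (index_factor i t)) /\ continuity (fun t => Im (index_factor i t)).
Proof.
  pose proof (continuity_amplitude i) as HA.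
  assert (Hre : continuity
            (fun t => 1 - amplitude i t * cos (dir m (Nat.iter n tau i) - 2 * PI * t))).
  { generalize (dir m (Nat.iter n tau i)) (amplitude i) HA. intros b A HA'. reg. }
  assert (Him : continuity
            (fun t => - (amplitude i t * sin (dir m (Nat.iter n tau i) - 2 * PI * t)))).
  { generalize (dir m (Nat.iter n tau i)) (amplitude i) HA. intros b A HA'. reg. }
  split.
  - exact (continuity_ext _ _ (fun t => eq_sym (proj1 (index_factor_parts i t))) Hre).
  - exact (continuity_ext _ _ (fun t => eq_sym (proj2 (index_factor_parts i t))) Him).
Qed.

Lemma index_factor_loop (i : nat) : index_factor i 0 = index_factor i 1.
Proof.
  unfold index_factor. rewrite amplitude_loop, Rmult_0_r, Rmult_1_r, Rminus_0_r.
  rewrite <- (expi_add_2PI (dir m (Nat.iter n tau i) - 2 * PI)).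
  f_equal. f_equal. f_equal. ring.
Qed.

(* The factor meets (-∞, 0] only if amplitude i t > 0 and 2πt ≡ dir (tau^n i), which would put
   the direction of tau^n i ≠ i inside cone i. *)
Lemma winds_index_factor_moved (i : nat) :
  (i < m)%nat -> Nat.iter n tau i <> i -> winds (index_factor i) 0.
Proof.
  intros Hi Hmoved. destruct (continuity_index_factor i) as [Hre Him].
  apply winds_avoiding_nonpos_reals; auto; [| apply index_factor_loop].
  intros t. destruct (index_factor_parts i t) as [-> ->].
  set (phi := dir m (Nat.iter n tau i) - 2 * PI * t).
  intros Hsin. pose proof (amplitude_nonneg i t) as HA.
  destruct HA as [HA | HA]; [| rewrite <- HA; lra].
  assert (Hs : sin phi = 0).
  { destruct (Rmult_integral (amplitude i t) (sin phi)); lra. }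
  destruct (sin_0_cos_pm1 phi Hs) as [Hc | Hc]; [exfalso | rewrite Hc; lra].
  assert (Hcone : 0 < cone m i (expi (2 * PI * t))).
  { unfold amplitude in HA. pose proof (pow_lt 2 n). nra. }
  apply cone_pos in Hcone. rewrite along_expi, Cmod_expi in Hcone.
  pose proof (cos_dir_sub_le m (Nat.iter n tau i) i (iter_tau_lt n i Hi) Hi Hmoved) as Hsep.
  replace (dir m (Nat.iter n tau i) - dir m i) with (phi + (2 * PI * t - dir m i)) in Hsep
    by (unfold phi; ring).
  rewrite cos_plus, Hs, Hc in Hsep. pose proof (aperture_bounds m). lra.
Qed.

(* Here the factor is e^{i (dir i - 2πt)} (e^{i (2πt - dir i)} - amplitude i t), and the second
   loop misses [0, ∞) because amplitude i t = 2^n > 1 where e^{i (2πt - dir i)} = 1. *)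
Lemma winds_index_factor_fixed (i : nat) :
  (i < m)%nat -> Nat.iter n tau i = i -> winds (index_factor i) (-1).
Proof.
  intros Hi Hfix.
  set (g t := (expi (2 * PI * t - dir m i) - RtoC (amplitude i t))%C).
  assert (Hg : forall t, Re (g t) = cos (2 * PI * t - dir m i) - amplitude i t /\
                         Im (g t) = sin (2 * PI * t - dir m i)).
  { intros t. unfold g, Re, Im; simpl. split; ring. }
  apply (winds_ext (fun t => expi (dir m i + 2 * PI * IZR (-1) * t) * g t)%C).
  { intros t _. unfold index_factor, g. rewrite Hfix.
    replace (dir m i + 2 * PI * IZR (-1) * t) with (dir m i - 2 * PI * t) by (simpl; ring).
    transitivity (expi (dir m i - 2 * PI * t) * expi (2 * PI * t - dir m i)
                  - RtoC (amplitude i t) * expi (dir m i - 2 * PI * t))%C; [ring |].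
    rewrite expi_add. replace (dir m i - 2 * PI * t + (2 * PI * t - dir m i)) with 0 by ring.
    rewrite expi_0. reflexivity. }
  replace (-1)%Z with (-1 + 0)%Z by reflexivity. apply winds_mult; [apply winds_expi |].
  pose proof (continuity_amplitude i) as HA.
  apply winds_avoiding_nonneg_reals.
  - apply (continuity_ext (fun t => cos (2 * PI * t - dir m i) - amplitude i t)).
    + intros t. symmetry. apply Hg.
    + generalize (dir m i) (amplitude i) HA. intros b A HA'. reg.
  - apply (continuity_ext (fun t => sin (2 * PI * t - dir m i))).
    + intros t. symmetry. apply Hg.
    + generalize (dir m i). intros b. reg.
  - intros t. destruct (Hg t) as [-> ->]. intros Hs. pose proof (amplitude_nonneg i t).
    destruct (sin_0_cos_pm1 _ Hs) as [Hc | Hc]; rewrite Hc; [| lra].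
    unfold amplitude. rewrite cone_expi, Hc. pose proof (aperture_bounds m).
    rewrite Rdiv_diag, Rmax_right by lra. pose proof (two_le_pow2 n n_pos). lra.
  - unfold g. rewrite amplitude_loop, Rmult_0_r, Rmult_1_r.
    rewrite <- (expi_add_2PI (0 - dir m i)). f_equal. f_equal. ring.
Qed.

Lemma displacement_factorization (r t : R) : 0 < r ->
  (circ (0, 0) r t - Nat.iter n cone_map (circ (0, 0) r t))%C =
  (RtoC r * (expi (2 * PI * t) * Cprod (seq 0 m) (fun i => index_factor i t)))%C.
Proof.
  intros Hr. rewrite circ_origin, iter_cone_map by auto.
  set (th := 2 * PI * t). unfold index_factor. fold th.
  rewrite (Cprod_one_sub _
             (fun i => RtoC (amplitude i t) * expi (dir m (Nat.iter n tau i) - th))%C).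
  2: apply seq_NoDup.
  2: { intros i j Hi Hj Hij. apply in_seq0 in Hi, Hj. unfold amplitude. fold th.
       destruct (cone_nonneg m i (expi th)) as [Ci | Ci]; [| left; rewrite <- Ci, Rmult_0_r; ring].
       destruct (cone_nonneg m j (expi th)) as [Cj | Cj]; [| right; rewrite <- Cj, Rmult_0_r; ring].
       exfalso. exact (cones_disjoint m i j _ Hi Hj Hij Ci Cj). }
  transitivity (RtoC r * expi th - Csum (seq 0 m) (fun i => RtoC r * (expi th *
                 (RtoC (amplitude i t) * expi (dir m (Nat.iter n tau i) - th)))))%C.
  { f_equal. apply Csum_ext. intros i _. unfold cone_term, amplitude. fold th.
    rewrite cone_scal by lra.
    replace (expi (dir m (Nat.iter n tau i)))
      with (expi th * expi (dir m (Nat.iter n tau i) - th))%C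
      by (rewrite expi_add; f_equal; ring).
    rewrite !RtoC_mult. ring. }
  rewrite <- !Cmult_Csum. ring.
Qed.

Lemma winds_displacement (r : R) : 0 < r ->
  winds (fun t => let x := circ (0, 0) r t in
                  (fst x - fst (Nat.iter n cone_map x), snd x - snd (Nat.iter n cone_map x)))
        (1 - Z.of_nat (length (filter (fun i => Nat.iter n tau i =? i)%nat (seq 0 m))))%Z.
Proof.
  intros Hr.
  apply (winds_ext (fun t => RtoC r * (expi (0 + 2 * PI * IZR 1 * t) *
                             Cprod (seq 0 m) (fun i => index_factor i t)))%C).
  { intros t _. cbv zeta. rewrite pair_sub_Cminus, displacement_factorization by auto.
    f_equal. f_equal. f_equal. simpl. ring. }
  replace (1 - Z.of_nat (length (filter _ (seq 0 m))))%Z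
    with (0 + (1 + fold_right (fun i s => ((if (Nat.iter n tau i =? i)%nat then -1 else 0) + s)%Z)
                                0%Z (seq 0 m)))%Z
    by (rewrite sum_neg_indicator; ring).
  apply winds_mult; [apply winds_const; auto |]. apply winds_mult; [apply winds_expi |].
  apply winds_Cprod. intros i Hi. apply in_seq0 in Hi.
  destruct (Nat.eqb_spec (Nat.iter n tau i) i).
  - apply winds_index_factor_fixed; auto.
  - apply winds_index_factor_moved; auto.
Qed.

End Index.

Lemma cone_map_index (n : nat) : (1 <= n)%nat ->
  fp_index (Nat.iter n cone_map) (0, 0)
    (1 - Z.of_nat (length (filter (fun i => Nat.iter n tau i =? i)%nat (seq 0 m))))%Z.
Proof.
  intros Hn. split.
  - exact (iter_cone_map_vanish n 0 Hn (fun i _ => cone_0 m i)).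
  - exists 1. split; [lra |]. intros r [Hr _]. split.
    + intros x _ Hx. exact (iter_cone_map_fixed_point n x Hn Hx).
    + apply winds_displacement; auto.
Qed.

End ConeMap.

(** * Block rotations *)

Section BlockCycle.

Local Open Scope nat_scope.

Fixpoint block_cycle (L : list nat) (i : nat) : nat :=
  match L with
  | nil => i
  | l :: L' => if i <? l then S i mod l else l + block_cycle L' (i - l)
  end.

Lemma block_cycle_lt (L : list nat) (i : nat) : i < list_sum L -> block_cycle L i < list_sum L.
Proof.
  revert i; induction L as [|l L IH]; intros i Hi; simpl in *; [lia |].
  destruct (Nat.ltb_spec i l).
  - pose proof (Nat.mod_upper_bound (S i) l ltac:(lia)). lia.
  - specialize (IH (i - l) ltac:(lia)). lia.
Qed.

Lemma iter_block_cycle_head (l : nat) (L : list nat) (n i : nat) :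
  i < l -> Nat.iter n (block_cycle (l :: L)) i = (i + n) mod l.
Proof.
  intros Hi. induction n as [|n IH].
  - simpl. rewrite Nat.add_0_r, Nat.mod_small; auto.
  - rewrite Nat.iter_succ, IH. cbn [block_cycle].
    pose proof (Nat.mod_upper_bound (i + n) l ltac:(lia)).
    destruct (Nat.ltb_spec ((i + n) mod l) l); [| lia].
    replace (S ((i + n) mod l)) with (1 + (i + n) mod l) by lia.
    rewrite Nat.Div0.add_mod_idemp_r. f_equal. lia.
Qed.

Lemma iter_block_cycle_tail (l : nat) (L : list nat) (n i : nat) :
  Nat.iter n (block_cycle (l :: L)) (l + i) = l + Nat.iter n (block_cycle L) i.
Proof.
  induction n as [|n IH]; auto. rewrite !Nat.iter_succ, IH. cbn [block_cycle].
  destruct (Nat.ltb_spec (l + Nat.iter n (block_cycle L) i) l); [lia |].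
  do 2 f_equal. lia.
Qed.

Lemma add_mod_eq_self (l n i : nat) : i < l -> ((i + n) mod l = i <-> n mod l = 0).
Proof.
  intros Hi. rewrite <- Nat.Div0.add_mod_idemp_r.
  pose proof (Nat.mod_upper_bound n l ltac:(lia)). set (q := n mod l) in *.
  split; intros E.
  - destruct (Nat.lt_ge_cases (i + q) l).
    + rewrite Nat.mod_small in E; lia.
    + replace (i + q) with ((i + q - l) + 1 * l) in E by lia.
      rewrite Nat.Div0.mod_add, Nat.mod_small in E; lia.
  - rewrite E, Nat.add_0_r, Nat.mod_small; auto.
Qed.

Lemma seq_shift_add (l k : nat) : seq l k = map (Nat.add l) (seq 0 k).
Proof.
  induction l as [|l IH]; simpl.
  - symmetry. apply map_id.
  - rewrite <- seq_shift, IH, map_map. reflexivity.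
Qed.

Lemma count_block_cycle_fixed (L : list nat) (n : nat) :
  length (filter (fun i => Nat.iter n (block_cycle L) i =? i) (seq 0 (list_sum L))) =
  list_sum (map (fun l => if n mod l =? 0 then l else 0) L).
Proof.
  induction L as [|l L IH]; [reflexivity |].
  change (list_sum (l :: L)) with (l + list_sum L).
  cbn [map]. change (list_sum (?x :: ?r)) with (x + list_sum r).
  rewrite seq_app, filter_app, length_app. f_equal.
  - rewrite (filter_ext_in _ (fun _ => n mod l =? 0)).
    + destruct (n mod l =? 0); [rewrite filter_true | rewrite filter_false]; simpl; auto.
      apply length_seq.
    + intros i Hi. apply in_seq in Hi. rewrite iter_block_cycle_head by lia.
      apply Bool.eq_iff_eq_true. rewrite !Nat.eqb_eq. apply add_mod_eq_self. lia.
  - rewrite <- IH, Nat.add_0_l, seq_shift_add, filter_map_swap, length_map. f_equal.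
    apply filter_ext. intros i. rewrite iter_block_cycle_tail.
    apply Bool.eq_iff_eq_true. rewrite !Nat.eqb_eq. lia.
Qed.

Lemma divsum_blocks (F : list nat) (a : nat -> nat) (n : nat) :
  Z.of_nat (list_sum (map (fun l => if n mod l =? 0 then l else 0)
                          (flat_map (fun k => repeat k (a k)) F)))
  = divsum F a n.
Proof.
  induction F as [|k F IH]; [reflexivity |].
  cbn [flat_map divsum fold_right]. rewrite map_app, list_sum_app, Nat2Z.inj_add, map_repeat.
  fold (divsum F a n). rewrite <- IH. f_equal.
  replace (list_sum (repeat (if n mod k =? 0 then k else 0) (a k)))
    with ((if n mod k =? 0 then k else 0) * a k)
    by (induction (a k); simpl; lia).
  destruct (Nat.eqb_spec k 0) as [-> | Hk]; [destruct (n mod 0 =? 0); lia |].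
  destruct (n mod k =? 0); lia.
Qed.

End BlockCycle.

Theorem mainTheorem8 (F : list nat) (a : nat -> nat)
  (HF : NoDup F) (Ha : forall k, In k F -> (0 < a k)%nat) :
  exists (f : R2 -> R2) (p : R2),
    continuous2 f /\ f p = p /\ isolated_invariant_singleton f p /\
    forall n : nat, (1 <= n)%nat ->
      fp_index (Nat.iter n f) p (1 - divsum F a n)%Z.
Proof.
  set (L := flat_map (fun k => repeat k (a k)) F).
  pose proof (block_cycle_lt L) as Hperm.
  exists (cone_map (list_sum L) (block_cycle L)), (0, 0).
  split; [| split; [| split]].
  - apply cone_map_continuous.
  - apply cone_map_0.
  - apply cone_map_isolated, Hperm.
  - intros n Hn. rewrite <- divsum_blocks, <- count_block_cycle_fixed.
    apply cone_map_index; auto.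
Qed.
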